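(* Let $\mathcal B=(\mathcal L,\mathcal Q)$ be a quadratic factor on $G=\mathbb{F}_p^n$ of complexity $(\ell,q)$ and rank $r$. Let $k\ge0$ and let $S\subseteq G$ be a set of size $k$ such that the family $\mathcal L\cup\{Mw:M\in\mathcal Q,w\in S\}$ is linearly independent. Then $$\big|\{x\in G:\ \mathcal L\cup\{Mw:M\in\mathcal Q,w\in S\}\cup\{Mx:M\in\mathcal Q\}\text{ is not linearly independent}\}\big|\le p^{n+\ell+(k+1)q-r}.$$
   Context: $p$ is an odd prime. A linear factor of complexity $\ell\ge1$ is a linearly independent set $\mathcal L=\{r_1,\dots,r_\ell\}\subseteq\mathbb{F}_p^n$ ($\emptyset$ if $\ell=0$); a purely quadratic factor of complexity $q\ge1$ is a set $\mathcal Q=\{M_1,\dots,M_q\}$ of pairwise distinct symmetric $n\times n$ matrices over $\mathbb{F}_p$ ($\emptyset$ if $q=0$), with rank $n$ if $q=0$ and otherwise $\min\{\mathrm{rk}(\sum_i\lambda_iM_i):(\lambda_i)\ne0\}$. A quadratic factor of complexity $(\ell,q)$ is a pair $(\mathcal L,\mathcal Q)$; its rank is the rank of $\mathcal Q$. ''Linearly independent'' refers to the family (list) of vectors, so repeated or zero vectors count as a dependence. *)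

From HB Require Import structures.
From mathcomp Require Import all_boot all_order all_algebra all_fingroup all_field.
Set Implicit Arguments. Unset Strict Implicit. Unset Printing Implicit Defensive.
Import GRing.Theory.
Local Open Scope ring_scope.

(* Linear independence of a family (list) of vectors is [free s] from
   vector.v (\dim <<s>> == size s), so repeated or zero vectors count as
   a dependence. *)

Definition symmetric_mx (F : fieldType) (n : nat) (M : 'M[F]_n) : bool :=
  M^T == M.

Definition linear_factor (F : fieldType) (n l : nat) (L : seq 'cV[F]_n) : Prop :=
  size L = l /\ free L.

Definition purely_quadratic_factor (F : fieldType) (n q : nat)
    (Q : seq 'M[F]_n) : Prop :=
  [/\ size Q = q, uniq Q & all (@symmetric_mx F n) Q].

Definition qf_rank (F : finFieldType) (n : nat) (Q : seq 'M[F]_n) : nat :=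
  if Q is [::] then n
  else \big[minn/n]_(lam : {ffun 'I_(size Q) -> F} | lam != 0)
         \rank (\sum_(i < size Q) lam i *: Q`_i)%R.

Definition QS_family (F : fieldType) (n : nat) (Q : seq 'M[F]_n)
    (S : seq 'cV[F]_n) : seq 'cV[F]_n :=
  [seq M *m w | M <- Q, w <- S].

From HB Require Import structures.
From mathcomp Require Import all_boot all_order all_algebra all_fingroup all_field.
From mathcomp Require Import zify.
Set Implicit Arguments. Unset Strict Implicit. Unset Printing Implicit Defensive.
Import Order.TTheory GRing.Theory.
Local Open Scope ring_scope.

(* If [V := L ++ QS_family Q S] is free but [V ++ [seq M x | M <- Q]] is not,
   some combination [A := \sum_i c_i Q_i] with [c != 0] maps [x] into the span
   of [V].  For a fixed [c] these [x] are, up to transposition, projections of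
   the left kernel of [col_mx A^T (- B^T)], where [B] has the vectors of [V] as
   columns; so there are at most [p ^ (n + size V - rank A)] of them, and
   [rank A >= qf_rank Q].  A union bound over the [p ^ q] coefficient vectors
   [c] gives the claim. *)

Section CardSolutions.

Variable F : finFieldType.

Lemma card_submx_leq m N (K : 'M[F]_(m, N)) :
  (#|[set u : 'rV[F]_N | (u <= K)%MS]| <= #|F| ^ \rank K)%N.
Proof.
apply: leq_trans (_ : #|[set w *m row_base K | w : 'rV_(\rank K)]| <= _)%N.
  apply/subset_leq_card/subsetP => u; rewrite inE => u_K.
  have /submxP[w ->] : (u <= row_base K)%MS by rewrite eq_row_base.
  exact: imset_f.
apply: leq_trans (leq_imset_card _ _) _.
rewrite card_mx mul1n; exact: leqnn.
Qed.

Lemma card_mulmx_preim_colspace r n m (A : 'M[F]_(r, n)) (B : 'M[F]_(r, m)) :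
  (#|[set x : 'cV_n | [exists y : 'cV_m, A *m x == B *m y]]|
    <= #|F| ^ (n + m - \rank A))%N.
Proof.
pose C := col_mx A^T (- B^T).
have rank_kerC : (\rank (kermx C) <= n + m - \rank A)%N.
  by rewrite mxrank_ker leq_sub2l // -mxrank_tr mxrankS // -addsmxE addsmxSl.
apply: leq_trans (_ : #|[set (lsubmx z)^T | z in [set z | (z <= kermx C)%MS]]| <= _)%N.
  apply/subset_leq_card/subsetP => x; rewrite inE => /existsP[y /eqP Axy].
  apply/imsetP; exists (row_mx x^T y^T); last by rewrite row_mxKl trmxK.
  by rewrite inE sub_kermx mul_row_col mulmxN -!trmx_mul Axy subrr.
apply: leq_trans (leq_imset_card _ _) _.
apply: leq_trans (card_submx_leq _) _.
by rewrite leq_pexp2l // ltnW // card_finNzRing_gt1.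
Qed.

Definition colseq_mx n (s : seq 'cV[F]_n) : 'M[F]_(n, size s) :=
  \matrix_(i, j) s`_j i 0.

Lemma memv_span_colseq_mx n (s : seq 'cV[F]_n) v :
  v \in <<s>>%VS -> exists y, v = colseq_mx s *m y.
Proof.
move=> v_s; exists (\col_j coord (in_tuple s) j v).
rewrite {1}(coord_span (X := in_tuple s) v_s); apply/matrixP => i k.
rewrite summxE !mxE; apply: eq_bigr => j _.
by rewrite !mxE (ord1 k) mulrC.
Qed.

Lemma card_mulmx_preim_span r n (A : 'M[F]_(r, n)) (s : seq 'cV[F]_r) :
  (#|[set x : 'cV_n | A *m x \in <<s>>%VS]| <= #|F| ^ (n + size s - \rank A))%N.
Proof.
apply: leq_trans (card_mulmx_preim_colspace A (colseq_mx s)).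
apply/subset_leq_card/subsetP => x; rewrite !inE => /memv_span_colseq_mx[y Axy].
by apply/existsP; exists y; rewrite Axy.
Qed.

End CardSolutions.

Lemma card_bigcup_leq (T I : finType) (P : pred I) (G : I -> {set T}) :
  (#|\bigcup_(i | P i) G i| <= \sum_(i | P i) #|G i|)%N.
Proof.
elim/big_rec2: _ => [|i X m _ leXm]; first by rewrite cards0.
by rewrite (leq_trans (leq_card_setU _ _).1) ?leq_add2l.
Qed.

Lemma not_free_cat_comb (F : finFieldType) (vT : vectType F) m
    (s : seq vT) (t : m.-tuple vT) :
  free s -> ~~ free (s ++ t) ->
  exists2 k : {ffun 'I_m -> F}, k != 0 & \sum_i k i *: t`_i \in <<s>>%VS.
Proof.
move=> free_s not_free.
have [/existsP[k /andP[]]|/existsPn no_comb] :=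
  boolP [exists k : {ffun 'I_m -> F}, (k != 0) && (\sum_i k i *: t`_i \in <<s>>%VS)].
  by exists k.
have comb0 (k : 'I_m -> F) : \sum_i k i *: t`_i \in <<s>>%VS -> k =1 \0.
  move=> k_s i; have := no_comb [ffun j => k j]; under eq_bigr do rewrite ffunE.
  by rewrite k_s andbT negbK => /eqP/ffunP/(_ i); rewrite !ffunE.
case/negP: not_free; rewrite cat_free free_s /=; apply/andP; split.
  by apply/freeP => k k_t0; apply: comb0; rewrite k_t0 mem0v.
apply/directv_addP/eqP; rewrite -subv0; apply/subvP => v /memv_capP[v_s v_t].
rewrite (coord_span v_t) memv0; apply/eqP/big1 => i _.
by rewrite (comb0 (coord t ^~ v)) ?scale0r // -(coord_span v_t).
Qed.

Lemma not_free_cat_mulmx_comb (F : finFieldType) n (Q : seq 'M[F]_n)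
    (s : seq 'cV[F]_n) x :
  free s -> ~~ free (s ++ [seq M *m x | M <- Q]) ->
  exists2 c : {ffun 'I_(size Q) -> F},
    c != 0 & (\sum_i c i *: Q`_i) *m x \in <<s>>%VS.
Proof.
set Qx := map_tuple (mulmx^~ x) (in_tuple Q).
move=> free_s /(not_free_cat_comb (t := Qx) free_s)[c c_neq0 c_s].
exists c => //; rewrite mulmx_suml.
have -> // : \sum_i c i *: Q`_i *m x = \sum_i c i *: Qx`_i.
by apply: eq_bigr => i _; rewrite -scalemxAl (nth_map 0).
Qed.

Lemma qf_rank_le_rank (F : finFieldType) n (Q : seq 'M[F]_n)
    (c : {ffun 'I_(size Q) -> F}) :
  c != 0 -> (qf_rank Q <= \rank (\sum_i c i *: Q`_i)%R)%N.
Proof.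
rewrite /qf_rank; case: Q c => [|M Q] c c_neq0.
  by case/eqP: c_neq0; apply/ffunP => -[].
by rewrite -minEnat -leEnat bigmin_le_cond.
Qed.

Lemma qf_rank_leq_dim (F : finFieldType) n (Q : seq 'M[F]_n) : (qf_rank Q <= n)%N.
Proof.
by rewrite /qf_rank; case: Q => // M Q; rewrite -minEnat -leEnat; exact: bigmin_le_id.
Qed.

Lemma card_not_free_cat_mulmx (F : finFieldType) n (Q : seq 'M[F]_n)
    (s : seq 'cV[F]_n) :
  free s ->
  (#|[set x : 'cV_n | ~~ free (s ++ [seq M *m x | M <- Q])]|
    <= #|F| ^ (size Q + (n + size s - qf_rank Q)))%N.
Proof.
move=> free_s.
pose A (c : {ffun 'I_(size Q) -> F}) := \sum_i c i *: Q`_i.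
apply: (@leq_trans
  #|\bigcup_(c : {ffun 'I_(size Q) -> F} | c != 0) [set x | A c *m x \in <<s>>%VS]|).
  apply/subset_leq_card/subsetP => x; rewrite inE.
  case/(not_free_cat_mulmx_comb free_s) => c c_neq0 c_s.
  by apply/bigcupP; exists c; rewrite ?inE.
apply: leq_trans (card_bigcup_leq _ _) _.
apply: (@leq_trans (\sum_(c : {ffun 'I_(size Q) -> F}) #|F| ^ (n + size s - qf_rank Q))).
  rewrite [leqRHS](bigID (fun c => c != 0)) /=; apply: leq_trans (leq_addr _ _).
  apply: leq_sum => c c_neq0; apply: leq_trans (card_mulmx_preim_span _ _) _.
  by rewrite leq_pexp2l ?(ltnW (card_finNzRing_gt1 _)) // leq_sub2l // qf_rank_le_rank.
rewrite sum_nat_const card_ffun card_ord expnD; exact: leqnn.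
Qed.

Theorem mainTheorem8 (p : nat) (hp : prime p) (hodd : odd p)
    (n l q k : nat) (L : seq 'cV['F_p]_n) (Q : seq 'M['F_p]_n)
    (S : seq 'cV['F_p]_n) :
  linear_factor l L ->
  purely_quadratic_factor q Q ->
  uniq S -> size S = k ->
  free (L ++ QS_family Q S) ->
  (#|[set x : 'cV['F_p]_n |
       ~~ free (L ++ QS_family Q S ++ [seq M *m x | M <- Q])]|
    <= p ^ (n + l + k.+1 * q - qf_rank Q))%N.
Proof.
move=> [size_L _] [size_Q _ _] _ size_S free_V.
have size_V : size (L ++ QS_family Q S) = (l + q * k)%N.
  by rewrite size_cat size_allpairs size_L size_Q size_S.
apply: leq_trans (leq_trans _ (card_not_free_cat_mulmx Q free_V)) _.
  by apply/subset_leq_card/subsetP => x; rewrite !inE catA.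
rewrite card_Fp // leq_pexp2l ?prime_gt0 // size_V size_Q.
have := qf_rank_leq_dim Q; lia.
Qed.
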